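(* Let $G$ be a connected graph and $G_{\lambda,k}$ a skeleton of it. The natural map $f:G\to G_{\lambda,k}$ is a quasi-isometry if and only if the blocks are uniformly bounded (i.e. there is a uniform bound on their diameters in $G$).
   Context: $d$ is the graph metric. A set $X$ of vertices is $k$-connected if any two of its points are joined by a finite sequence in $X$ with consecutive distances $\le k$. Skeleton $G_{\lambda,k}$ (root $x_0\in V(G)$, scale $\lambda\ge1$, connectivity $k\ge1$): layers $A_{N,\lambda}=\{x: N\lambda<d(x,x_0)\le(N+1)\lambda\}$, $N\in\mathbb Z$; blocks are the maximal $k$-connected subsets of layers; $G_{\lambda,k}$ has a vertex per block and an edge between two blocks iff an edge of $G$ joins a vertex of one to a vertex of the other. The natural map $f$ sends each vertex to its block. $f$ is a quasi-isometry if there are constants $a\ge1,b\ge0$ with $\frac1a d(x,y)-b\le d(f(x),f(y))\le a d(x,y)+b$ and a quasi-isometric embedding in the other direction exists. *)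

From Stdlib Require Import Reals Lra Lia ZArith ClassicalEpsilon.
Open Scope R_scope.

Section Graphs.
Context {T : Type} (adj : T -> T -> Prop).

Inductive walk : nat -> T -> T -> Prop :=
| walk0 x : walk 0 x x
| walkS n x z y : adj x z -> walk n z y -> walk (S n) x y.

Definition connected_graph : Prop := forall x y : T, exists n, walk n x y.

(* graph metric: the least length of a walk from x to y (well defined when
   x and y lie in the same component, in particular in a connected graph) *)
Definition gdist (x y : T) : nat :=
  epsilon (inhabits 0%nat)
    (fun n => walk n x y /\ forall m, walk m x y -> (n <= m)%nat).
End Graphs.

Section Skeleton.
Context {V : Type} (adj : V -> V -> Prop) (x0 : V) (lam : R) (k : nat).

Let d := gdist adj.

Definition layer (N : Z) (x : V) : Prop :=
  IZR N * lam < INR (d x x0) <= (IZR N + 1) * lam.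

Inductive kchain (X : V -> Prop) : V -> V -> Prop :=
| kchain0 x : X x -> kchain X x x
| kchainS x z y : X x -> X z -> (d x z <= k)%nat -> kchain X z y -> kchain X x y.

Definition k_connected (X : V -> Prop) : Prop :=
  forall x y, X x -> X y -> kchain X x y.

Definition is_block (B : V -> Prop) : Prop :=
  (exists x, B x) /\
  exists N : Z,
    (forall x, B x -> layer N x) /\ k_connected B /\
    (forall Y : V -> Prop,
        (forall x, B x -> Y x) -> (forall x, Y x -> layer N x) ->
        k_connected Y -> forall x, Y x -> B x).

(* skeleton graph G_{lambda,k}: vertices are the blocks (sets of vertices
   of G, compared extensionally), two distinct blocks adjacent iff an edge
   of G joins them.  Non-blocks are isolated and never used. *)
Definition skel_adj (B B' : V -> Prop) : Prop :=
  is_block B /\ is_block B' /\ B <> B' /\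
  exists x y, B x /\ B' y /\ adj x y.

Definition skel_dist (B B' : V -> Prop) : nat := gdist skel_adj B B'.

Definition nat_map (x : V) : V -> Prop :=
  epsilon (inhabits (fun _ : V => False)) (fun B => is_block B /\ B x).

Definition natural_map_qi : Prop :=
  (exists a b : R, 1 <= a /\ 0 <= b /\
     forall x y : V,
       / a * INR (d x y) - b <= INR (skel_dist (nat_map x) (nat_map y)) /\
       INR (skel_dist (nat_map x) (nat_map y)) <= a * INR (d x y) + b) /\
  (exists (g : (V -> Prop) -> V) (a b : R), 1 <= a /\ 0 <= b /\
     forall B B' : V -> Prop, is_block B -> is_block B' ->
       / a * INR (skel_dist B B') - b <= INR (d (g B) (g B')) /\
       INR (d (g B) (g B')) <= a * INR (skel_dist B B') + b).

Definition blocks_uniformly_bounded : Prop :=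
  exists D : R, forall B, is_block B ->
    forall x y, B x -> B y -> INR (d x y) <= D.

End Skeleton.

(** The natural map [f] is always 1-Lipschitz: an edge of [G] lies inside one
    block or joins two adjacent blocks.  If blocks have diameter at most [D],
    then conversely every edge of the skeleton lifts to an edge of [G] between
    the two blocks, so a skeleton path of length [m] yields a path of length at
    most [(D + 1) m + D] in [G]; choosing a point in each block gives the
    quasi-inverse.  If [f] is a quasi-isometry, two points of one block have
    the same image, so their distance is at most [a b]. *)

From Pilot Require Import Defs.
From Stdlib Require Import Reals Lra Lia ZArith Wf_nat ClassicalEpsilon Classical
  FunctionalExtensionality PropExtensionality.
Set Implicit Arguments.
Unset Strict Implicit.
Open Scope R_scope.

Section Walks.
Variables (T : Type) (adj : T -> T -> Prop).

Lemma walk_cat n m x y z :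
  walk adj n x y -> walk adj m y z -> walk adj (n + m) x z.
Proof. induction 1; intros; simpl; [assumption | econstructor; eauto]. Qed.

Lemma walk_rev (adj_sym : forall x y, adj x y -> adj y x) n x y :
  walk adj n x y -> walk adj n y x.
Proof.
  induction 1 as [| n x z y xz _ IH]; [constructor |].
  replace (S n) with (n + 1)%nat by lia.
  eapply walk_cat; [exact IH | econstructor; [apply adj_sym, xz | constructor]].
Qed.

Lemma gdist_spec n x y : walk adj n x y ->
  walk adj (gdist adj x y) x y /\ forall m, walk adj m x y -> (gdist adj x y <= m)%nat.
Proof.
  intro W; unfold gdist; apply epsilon_spec.
  destruct (dec_inh_nat_subset_has_unique_least_element (fun m => walk adj m x y))
    as [m [least _]]; eauto using classic.
Qed.

Lemma gdist_min n x y : walk adj n x y -> (gdist adj x y <= n)%nat.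
Proof. intro W; apply (gdist_spec W), W. Qed.

Lemma gdist_refl x : gdist adj x x = 0%nat.
Proof. pose proof (gdist_min (walk0 adj x)); lia. Qed.

Lemma gdist_adj x y : adj x y -> (gdist adj x y <= 1)%nat.
Proof. intro xy; apply gdist_min with (n := 1%nat); econstructor; [exact xy | constructor]. Qed.

Section Connected.
Hypothesis adj_connected : connected_graph adj.

Lemma gdist_walk x y : walk adj (gdist adj x y) x y.
Proof. destruct (adj_connected x y) as [n W]; apply (gdist_spec W). Qed.

Lemma gdist_triangle x y z : (gdist adj x z <= gdist adj x y + gdist adj y z)%nat.
Proof. apply gdist_min; eapply walk_cat; apply gdist_walk. Qed.

Lemma gdist_sym (adj_sym : forall x y, adj x y -> adj y x) x y :
  gdist adj x y = gdist adj y x.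
Proof. apply Nat.le_antisymm; apply gdist_min, walk_rev, gdist_walk; exact adj_sym. Qed.

End Connected.
End Walks.

Lemma walk_contract {T U} (adj : T -> T -> Prop) (adj' : U -> U -> Prop) (f : T -> U) :
  (forall x y, adj x y -> f x = f y \/ adj' (f x) (f y)) ->
  forall n x y, walk adj n x y -> exists m, (m <= n)%nat /\ walk adj' m (f x) (f y).
Proof.
  intros f_adj n x y W; induction W as [x | n x z y xz _ [m [mn W']]].
  - exists 0%nat; split; [lia | constructor].
  - destruct (f_adj x z xz) as [-> | fxz].
    + exists m; split; [lia | exact W'].
    + exists (S m); split; [lia | econstructor; eassumption].
Qed.

Lemma gdist_contract {T U} (adj : T -> T -> Prop) (adj' : U -> U -> Prop) (f : T -> U) :
  connected_graph adj ->
  (forall x y, adj x y -> f x = f y \/ adj' (f x) (f y)) ->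
  forall x y, (gdist adj' (f x) (f y) <= gdist adj x y)%nat.
Proof.
  intros conn f_adj x y.
  destruct (walk_contract f_adj (gdist_walk conn x y)) as [m [mn W]].
  pose proof (gdist_min W); lia.
Qed.

Lemma qi_bounds_of_nat (D s n : nat) :
  (s <= n)%nat -> (n <= (D + 1) * s + D)%nat ->
  (/ (INR D + 1) * INR n - INR D <= INR s /\ INR s <= (INR D + 1) * INR n + INR D) /\
  (/ (INR D + 1) * INR s - INR D <= INR n /\ INR n <= (INR D + 1) * INR s + INR D).
Proof.
  intros sn ns; apply le_INR in sn; apply le_INR in ns.
  rewrite plus_INR, mult_INR, plus_INR in ns; simpl in ns.
  pose proof (pos_INR D); pose proof (pos_INR s).
  assert (inv_pos : 0 < / (INR D + 1)) by (apply Rinv_0_lt_compat; lra).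
  assert (inv_le1 : / (INR D + 1) <= 1)
    by (rewrite <- Rinv_1; apply Rinv_le_contravar; lra).
  assert (inv_n : / (INR D + 1) * INR n <= INR s + / (INR D + 1) * INR D).
  { replace (INR s) with (/ (INR D + 1) * ((INR D + 1) * INR s)) by (field; lra).
    rewrite <- Rmult_plus_distr_l; apply Rmult_le_compat_l; lra. }
  repeat split; nra.
Qed.

Section Skeleton.
Variables (V : Type) (adj : V -> V -> Prop) (x0 : V) (lam : R) (k : nat).
Hypothesis adj_sym : forall x y, adj x y -> adj y x.
Hypothesis adj_connected : connected_graph adj.
Hypothesis lam_gt0 : 0 < lam.

Local Notation d := (gdist adj).
Local Notation layer := (layer adj x0 lam).
Local Notation kchain := (kchain adj k).
Local Notation k_connected := (k_connected adj k).
Local Notation block := (is_block adj x0 lam k).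
Local Notation f := (nat_map adj x0 lam k).
Local Notation skel_dist := (skel_dist adj x0 lam k).

Lemma layer_unique N N' x : layer N x -> layer N' x -> N = N'.
Proof.
  unfold Defs.layer; intros [lo hi] [lo' hi'].
  destruct (Z.lt_trichotomy N N') as [lt | [eq | gt]]; [exfalso | exact eq | exfalso].
  - assert (IZR N + 1 <= IZR N') by (rewrite <- plus_IZR; apply IZR_le; lia); nra.
  - assert (IZR N' + 1 <= IZR N) by (rewrite <- plus_IZR; apply IZR_le; lia); nra.
Qed.

Lemma layer_exists x : exists N, layer N x.
Proof.
  set (r := INR (d x x0) / lam).
  destruct (archimed (- r)) as [up_gt up_le].
  exists (- up (- r))%Z; unfold Defs.layer; rewrite opp_IZR.
  replace (INR (d x x0)) with (r * lam) by (unfold r; field; lra).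
  split; nra.
Qed.

Lemma kchain_sub (X Y : V -> Prop) a b :
  (forall z, X z -> Y z) -> kchain X a b -> kchain Y a b.
Proof. intros XY; induction 1; econstructor; eauto. Qed.

Lemma kchain_cat X a b c : kchain X a b -> kchain X b c -> kchain X a c.
Proof. induction 1; intros; [assumption | econstructor; eauto]. Qed.

Lemma kchain_rev X a b : kchain X a b -> kchain X b a.
Proof.
  induction 1 as [x Xx | x z y Xx Xz xz _ IH]; [now constructor |].
  apply kchain_cat with z; [exact IH |].
  apply kchainS with x; [assumption | assumption | | now constructor].
  rewrite (gdist_sym adj_connected adj_sym); exact xz.
Qed.

Lemma k_connected_union (B B' : V -> Prop) x :
  k_connected B -> k_connected B' -> B x -> B' x ->
  k_connected (fun z => B z \/ B' z).
Proof.
  intros kB kB' Bx B'x.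
  assert (to_x : forall u, B u \/ B' u -> kchain (fun z => B z \/ B' z) u x).
  { intros u [Bu | B'u];
      [apply (kchain_sub (X := B)) | apply (kchain_sub (X := B'))]; auto. }
  intros u v Hu Hv; apply kchain_cat with x; [now apply to_x | now apply kchain_rev, to_x].
Qed.

Lemma block_unique B B' x : block B -> block B' -> B x -> B' x -> B = B'.
Proof.
  intros [_ [N [lB [kB maxB]]]] [_ [N' [lB' [kB' maxB']]]] Bx B'x.
  assert (N = N') as <- by (eapply layer_unique; eauto).
  assert (kU := k_connected_union kB kB' Bx B'x).
  assert (lU : forall z, B z \/ B' z -> layer N z) by (intros z []; auto).
  apply functional_extensionality; intro z; apply propositional_extensionality.
  split; intro Hz;
    [apply (maxB' (fun z => B z \/ B' z)) | apply (maxB (fun z => B z \/ B' z))]; auto.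
Qed.

Definition kcomponent (X : V -> Prop) (x : V) : V -> Prop :=
  fun z => X z /\ kchain X x z.

Lemma kchain_kcomponent X x a b :
  kchain X x a -> kchain X a b -> kchain (kcomponent X x) a b.
Proof.
  intros xa ab; revert xa; induction ab as [a Xa | a z b Xa Xz az _ IH]; intro xa.
  - now constructor.
  - assert (xz : kchain X x z).
    { apply kchain_cat with a; [| econstructor; eauto; constructor]; auto. }
    econstructor; [split | split | |]; eauto.
Qed.

Lemma kcomponent_k_connected X x : k_connected (kcomponent X x).
Proof.
  intros u v [_ xu] [_ xv].
  apply kchain_kcomponent with (1 := xu), kchain_cat with x; [apply kchain_rev |]; assumption.
Qed.

Lemma kcomponent_is_block N x : layer N x -> block (kcomponent (layer N) x).
Proof.
  intro lx; assert (xx : kchain (layer N) x x) by now constructor.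
  split; [exists x; split; assumption |].
  exists N; split; [intros z []; assumption |]; split; [apply kcomponent_k_connected |].
  intros Y compY lY kY z Yz; split; [now apply lY |].
  apply (kchain_sub lY), kY; [apply compY; split |]; assumption.
Qed.

Lemma block_exists x : exists B, block B /\ B x.
Proof.
  destruct (layer_exists x) as [N lx].
  exists (kcomponent (layer N) x); split; [now apply kcomponent_is_block |].
  split; [| constructor]; assumption.
Qed.

Lemma nat_map_spec x : block (f x) /\ f x x.
Proof. unfold nat_map; apply epsilon_spec, block_exists. Qed.

Lemma nat_map_eq B x : block B -> B x -> f x = B.
Proof. intros; destruct (nat_map_spec x); eapply block_unique; eauto. Qed.

Lemma nat_map_adj x y : adj x y -> f x = f y \/ skel_adj adj x0 lam k (f x) (f y).
Proof.
  intro xy; destruct (classic (f x = f y)) as [eq | neq]; [now left | right].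
  destruct (nat_map_spec x), (nat_map_spec y).
  split; [| split; [| split]]; auto; exists x, y; auto.
Qed.

Lemma skel_dist_le_gdist x y : (skel_dist (f x) (f y) <= d x y)%nat.
Proof. exact (gdist_contract adj_connected nat_map_adj x y). Qed.

Section BoundedBlocks.
Variable D : nat.
Hypothesis block_diam : forall B, block B -> forall x y, B x -> B y -> (d x y <= D)%nat.

Lemma gdist_le_skel_walk m B B' x y :
  walk (skel_adj adj x0 lam k) m B B' -> block B' -> B x -> B' y ->
  (d x y <= (D + 1) * m + D)%nat.
Proof.
  intros W; revert x; induction W as [B | m B C B' BC _ IH]; intros x bB' Bx B'y.
  - specialize (block_diam bB' Bx B'y); lia.
  - destruct BC as [bB [_ [_ [a [c [Ba [Cc ac]]]]]]].
    specialize (IH c bB' Cc B'y); specialize (block_diam bB Bx Ba).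
    pose proof (gdist_adj ac); pose proof (gdist_triangle adj_connected x a y);
      pose proof (gdist_triangle adj_connected a c y); lia.
Qed.

Lemma gdist_le_skel_dist x y : (d x y <= (D + 1) * skel_dist (f x) (f y) + D)%nat.
Proof.
  destruct (nat_map_spec x) as [_ fxx], (nat_map_spec y) as [fy_block fyy].
  destruct (walk_contract nat_map_adj (gdist_walk adj_connected x y)) as [m [_ W]].
  exact (gdist_le_skel_walk (proj1 (gdist_spec W)) fy_block fxx fyy).
Qed.

End BoundedBlocks.

Lemma blocks_bounded_nat : blocks_uniformly_bounded adj x0 lam k ->
  exists D : nat, forall B, block B -> forall x y, B x -> B y -> (d x y <= D)%nat.
Proof.
  intros [D diam]; destruct (INR_unbounded D) as [Dn Dn_gt].
  exists Dn; intros B bB x y Bx By; apply INR_le.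
  pose proof (diam B bB x y Bx By); lra.
Qed.

Definition block_point (B : V -> Prop) : V := epsilon (inhabits x0) B.

Lemma block_point_in B : block B -> B (block_point B).
Proof. intros [[x Bx] _]; unfold block_point; apply epsilon_spec; exists x; exact Bx. Qed.

Lemma natural_map_qi_of_bounded :
  blocks_uniformly_bounded adj x0 lam k -> natural_map_qi adj x0 lam k.
Proof.
  intro bounded; destruct (blocks_bounded_nat bounded) as [D diam].
  pose (qi x y := qi_bounds_of_nat (skel_dist_le_gdist x y) (gdist_le_skel_dist diam x y)).
  pose proof (pos_INR D).
  split.
  - exists (INR D + 1), (INR D); repeat split; try lra; apply qi.
  - exists block_point, (INR D + 1), (INR D); split; [lra | split; [lra |]].
    intros B B' bB bB'.
    pose proof (proj2 (qi (block_point B) (block_point B'))) as qi_B.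
    rewrite (nat_map_eq bB (block_point_in bB)), (nat_map_eq bB' (block_point_in bB')) in qi_B.
    exact qi_B.
Qed.

Lemma bounded_of_natural_map_qi :
  natural_map_qi adj x0 lam k -> blocks_uniformly_bounded adj x0 lam k.
Proof.
  intros [[a [b [a_ge1 [b_ge0 qi]]]] _]; exists (a * b).
  intros B bB x y Bx By; destruct (qi x y) as [lower _].
  rewrite (nat_map_eq bB Bx), (nat_map_eq bB By) in lower.
  unfold Defs.skel_dist in lower; rewrite gdist_refl in lower; simpl in lower.
  replace (INR (d x y)) with (a * (/ a * INR (d x y))) by (field; lra).
  apply Rmult_le_compat_l; lra.
Qed.

End Skeleton.

Theorem lemma3 (V : Type) (adj : V -> V -> Prop) (x0 : V) (lam : R) (k : nat) :
  (forall x y, adj x y -> adj y x) ->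
  (forall x, ~ adj x x) ->
  connected_graph adj ->
  1 <= lam ->
  (1 <= k)%nat ->
  (natural_map_qi adj x0 lam k <-> blocks_uniformly_bounded adj x0 lam k).
Proof.
  intros adj_sym _ adj_connected lam_ge1 _.
  split; [apply bounded_of_natural_map_qi | apply natural_map_qi_of_bounded];
    trivial; lra.
Qed.
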